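(* Let $\mathcal{H}$ be a real Hilbert space, let $A\colon \mathcal{H}\rightrightarrows\mathcal{H}$ be maximally monotone, let $B\colon \mathcal{H}\to\mathcal{H}$ be monotone and $L_1$-Lipschitz, and let $C\colon \mathcal{H}\to\mathcal{H}$ be $1/L_2$-cocoercive. Let $x\in(A+B+C)^{-1}(0)$, let $\lambda \in \left(0,\frac{2}{4L_1+L_2} \right)$, and given $x_0,x_{-1}\in\mathcal{H}$ let $$x_{k+1} = J_{\lambda A}\bigl(x_k - 2\lambda B(x_k) + \lambda B(x_{k-1}) - \lambda C(x_k) \bigr) \quad\forall k\in\mathbb{N}.$$ Then there exists $\varepsilon>0$ such that, for all $k\in\mathbb{N}$, $$\|x_{k+1}-x\|^2 + 2\lambda\langle B(x_{k+1})-B(x_k),x-x_{k+1}\rangle + \left(\lambda L_1+\varepsilon \right)\|x_{k+1}-x_k\|^2 \leq \|x_k-x\|^2 + 2\lambda\langle B(x_k)-B(x_{k-1}),x-x_{k}\rangle + \lambda L_1\|x_k-x_{k-1}\|^2.$$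
   Context: $J_{\lambda A}:=(I+\lambda A)^{-1}$ is the resolvent. $C$ is $1/L_2$-cocoercive if $\langle x-y,C(x)-C(y)\rangle\geq\frac{1}{L_2}\|C(x)-C(y)\|^2$ for all $x,y$. *)

From HB Require Import structures.
From mathcomp Require Import all_boot all_order all_algebra.
From mathcomp Require Import all_classical all_reals all_analysis.
Set Implicit Arguments. Unset Strict Implicit. Unset Printing Implicit Defensive.
Import Order.TTheory GRing.Theory Num.Theory.
Import numFieldNormedType.Exports.
Local Open Scope classical_set_scope.
Local Open Scope ring_scope.

Definition is_inner_product (R : realType) (V : completeNormedModType R)
  (ip : V -> V -> R) : Prop :=
  [/\ (forall x y, ip x y = ip y x),
      (forall a x y z, ip (a *: x + y) z = a * ip x z + ip y z),
      (forall x, 0 <= ip x x),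
      (forall x, ip x x = 0 -> x = 0)
    & (forall x, `|x| ^+ 2 = ip x x)].

Definition monotone_op (R : realType) (V : completeNormedModType R)
  (ip : V -> V -> R) (A : V -> set V) : Prop :=
  forall x y u v, A x u -> A y v -> 0 <= ip (x - y) (u - v).

Definition maximally_monotone (R : realType) (V : completeNormedModType R)
  (ip : V -> V -> R) (A : V -> set V) : Prop :=
  monotone_op ip A /\
  forall A' : V -> set V, monotone_op ip A' ->
    (forall x u, A x u -> A' x u) -> forall x u, A' x u -> A x u.

Definition monotone_fun (R : realType) (V : completeNormedModType R)
  (ip : V -> V -> R) (B : V -> V) : Prop :=
  forall x y, 0 <= ip (x - y) (B x - B y).

Definition lipschitz_with (R : realType) (V : completeNormedModType R)
  (L : R) (B : V -> V) : Prop :=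
  forall x y, `|B x - B y| <= L * `|x - y|.

Definition cocoercive_with (R : realType) (V : completeNormedModType R)
  (ip : V -> V -> R) (L : R) (C : V -> V) : Prop :=
  forall x y, ip (x - y) (C x - C y) >= L^-1 * `|C x - C y| ^+ 2.

(* p = J_{lam A}(z) = (I + lam A)^{-1}(z), i.e. z ∈ p + lam A(p). *)
Definition resolvent_rel (R : realType) (V : completeNormedModType R)
  (lam : R) (A : V -> set V) (z p : V) : Prop :=
  exists a, A p a /\ z = p + lam *: a.

From HB Require Import structures.
From mathcomp Require Import all_boot all_order all_algebra.
From mathcomp Require Import all_classical all_reals all_analysis.
From mathcomp Require Import ring lra.
Import Order.TTheory GRing.Theory Num.Theory.
Import numFieldNormedType.Exports.
Local Open Scope classical_set_scope.
Local Open Scope ring_scope.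

Set Implicit Arguments.
Unset Strict Implicit.

(* Test the monotonicity of A between x and x_{k+1}, using that
   (x_k - 2 lam B x_k + lam B x_{k-1} - lam C x_k - x_{k+1}) / lam is in A x_{k+1}
   and -(B x + C x) is in A x.  Expanding, the B-part splits into a monotone term
   <x_{k+1} - x, B x_{k+1} - B x>, two telescoping terms, and a cross term
   <x_{k+1} - x_k, B x_k - B x_{k-1}> controlled by the Lipschitz constant; the
   C-part is controlled by cocoercivity after a Young inequality, which is where
   the loss lam L2 / 2 comes from.  The step size condition leaves a positive
   multiple of |x_{k+1} - x_k|^2 to spare. *)

Section InnerProduct.
Variables (R : realType) (V : completeNormedModType R) (ip : V -> V -> R).
Hypothesis ip_inner : is_inner_product ip.

Lemma ipC x y : ip x y = ip y x.
Proof. by case: ip_inner. Qed.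

Lemma ipDZl a x y z : ip (a *: x + y) z = a * ip x z + ip y z.
Proof. by case: ip_inner. Qed.

Lemma ip_normE x : `|x| ^+ 2 = ip x x.
Proof. by case: ip_inner. Qed.

Lemma ip0l z : ip 0 z = 0.
Proof. by have := ipDZl 1 0 0 z; rewrite scaler0 addr0 mul1r; lra. Qed.

Lemma ipDl x y z : ip (x + y) z = ip x z + ip y z.
Proof. by rewrite -[x]scale1r ipDZl mul1r scale1r. Qed.

Lemma ipZl a x z : ip (a *: x) z = a * ip x z.
Proof. by rewrite -[a *: x]addr0 ipDZl ip0l addr0. Qed.

Lemma ipNl x z : ip (- x) z = - ip x z.
Proof. by rewrite -scaleN1r ipZl mulN1r. Qed.

Lemma ipBl x y z : ip (x - y) z = ip x z - ip y z.
Proof. by rewrite ipDl ipNl. Qed.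

Lemma ip0r z : ip z 0 = 0.
Proof. by rewrite ipC ip0l. Qed.

Lemma ipDr x y z : ip z (x + y) = ip z x + ip z y.
Proof. by rewrite ipC ipDl !(ipC z). Qed.

Lemma ipZr a x z : ip z (a *: x) = a * ip z x.
Proof. by rewrite ipC ipZl ipC. Qed.

Lemma ipNr x z : ip z (- x) = - ip z x.
Proof. by rewrite ipC ipNl ipC. Qed.

Lemma ipBr x y z : ip z (x - y) = ip z x - ip z y.
Proof. by rewrite ipDr ipNr. Qed.

Lemma sqr_normD u v : `|u + v| ^+ 2 = `|u| ^+ 2 + 2 * ip u v + `|v| ^+ 2.
Proof. by rewrite !ip_normE ipDl !ipDr (ipC v u); ring. Qed.

Lemma young_ip t u v : 2 * t * ip u v <= t ^+ 2 * `|u| ^+ 2 + `|v| ^+ 2.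
Proof.
have sq_ge0 : 0 <= ip (t *: u - v) (t *: u - v) by rewrite -ip_normE sqr_ge0.
by rewrite !(ipBl, ipBr, ipZl, ipZr) -!ip_normE (ipC v u) in sq_ge0; lra.
Qed.

Lemma lipschitz_ip_le (L : R) (B : V -> V) u y z :
  0 <= L -> lipschitz_with L B ->
  2 * ip u (B y - B z) <= L * (`|u| ^+ 2 + `|y - z| ^+ 2).
Proof.
move=> L_ge0 lipB; have lipByz := lipB y z.
have [L0|L_neq0] := eqVneq L 0.
  rewrite L0 mul0r in lipByz *.
  have /normr0_eq0/eqP : `|B y - B z| = 0 by apply/le_anti; rewrite lipByz normr_ge0.
  rewrite subr_eq0 => /eqP ->.
  by rewrite subrr ip0r mulr0 mul0r.
have L_gt0 : 0 < L by rewrite lt_def L_neq0.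
have lipByz2 : `|B y - B z| ^+ 2 <= L ^+ 2 * `|y - z| ^+ 2.
  by rewrite -exprMn lerXn2r ?nnegrE ?mulr_ge0.
rewrite -(ler_pM2l L_gt0).
have := young_ip L u (B y - B z); lra.
Qed.

Lemma cocoercive_ip_ge (L : R) (C : V -> V) p x y :
  0 < L -> cocoercive_with ip L C ->
  - (L / 2 * `|p - y| ^+ 2) <= 2 * ip (p - x) (C y - C x).
Proof.
move=> L_gt0 cocC.
have -> : p - x = (y - x) + (p - y) by rewrite [RHS]addrC addrA subrK.
rewrite ipDl.
have cocCyx := cocC y x; rewrite -(ler_pM2l L_gt0) mulrA mulfV ?gt_eqF // mul1r in cocCyx.
rewrite -(ler_pM2l L_gt0).
have := young_ip (L / 2) (- (p - y)) (C y - C x); rewrite ipNl normrN; lra.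
Qed.

End InnerProduct.

Lemma resolvent_ip_ge0 (R : realType) (V : completeNormedModType R)
    (ip : V -> V -> R) (A : V -> set V) (lam : R) (x a z p : V) :
  is_inner_product ip -> monotone_op ip A -> 0 <= lam ->
  A x a -> resolvent_rel lam A z p ->
  0 <= ip (p - x) (z - p - lam *: a).
Proof.
move=> ip_inner monA lam_ge0 Axa [b [Apb ->]].
rewrite [p + lam *: b]addrC addrK -scalerBr ipZr //.
by rewrite mulr_ge0 // monA.
Qed.

Section ForwardHalfReflectedBackward.
Variables (R : realType) (V : completeNormedModType R) (ip : V -> V -> R).
Variables (A : V -> set V) (B C : V -> V) (L1 L2 lam : R) (x a : V).
Hypotheses (ip_inner : is_inner_product ip) (monA : monotone_op ip A).
Hypotheses (L1_ge0 : 0 <= L1) (monB : monotone_fun ip B).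
Hypotheses (lipB : lipschitz_with L1 B).
Hypotheses (L2_gt0 : 0 < L2) (cocC : cocoercive_with ip L2 C).
Hypotheses (Axa : A x a) (a_eq : a + B x + C x = 0) (lam_gt0 : 0 < lam).

Lemma fhrb_energy_decrease p q r :
  resolvent_rel lam A (q - 2 * lam *: B q + lam *: B r - lam *: C q) p ->
  `|p - x| ^+ 2 + 2 * lam * ip (B p - B q) (x - p)
    + (1 - lam * L1 - lam * L2 / 2) * `|p - q| ^+ 2
  <= `|q - x| ^+ 2 + 2 * lam * ip (B q - B r) (x - q)
    + lam * L1 * `|q - r| ^+ 2.
Proof.
move=> res_p.
have ip_a v : ip v a = - ip v (B x) - ip v (C x).
  by have := congr1 (ip v) a_eq; rewrite ip0r // !ipDr //; lra.
have monA_px := resolvent_ip_ge0 ip_inner monA (ltW lam_gt0) Axa res_p.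
have expand_qx : `|q - x| ^+ 2 = `|p - x| ^+ 2 + 2 * ip (p - x) (q - p) + `|q - p| ^+ 2.
  by rewrite -sqr_normD // [_ + (q - p)]addrC addrA subrK.
have monB_px : 0 <= ip (p - x) (B p - B x) := monB p x.
have lipB_pqr := lipschitz_ip_le ip_inner (q - p) q r L1_ge0 lipB.
have cocC_pqx := cocoercive_ip_ge ip_inner p x q L2_gt0 cocC.
rewrite (distrC q p) in expand_qx lipB_pqr.
move: monA_px expand_qx monB_px lipB_pqr cocC_pqx.
rewrite (ipC ip_inner (B p - B q)) (ipC ip_inner (B q - B r)).
rewrite !(ipDl ip_inner, ipBl ip_inner, ipNl ip_inner, ipZl ip_inner).
rewrite !(ipDr ip_inner, ipBr ip_inner, ipNr ip_inner, ipZr ip_inner) !ip_a.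
move=> monA_px expand_qx monB_px lipB_pqr cocC_pqx.
have := mulr_ge0 (ltW lam_gt0) monB_px.
have := ler_wpM2l (ltW lam_gt0) lipB_pqr.
have := ler_wpM2l (ltW lam_gt0) cocC_pqx.
lra.
Qed.

End ForwardHalfReflectedBackward.

Theorem lemma5p1 (R : realType) (V : completeNormedModType R)
  (ip : V -> V -> R) (A : V -> set V) (B C : V -> V) (L1 L2 lam : R)
  (x : V) (xs : nat -> V) :
  is_inner_product ip ->
  maximally_monotone ip A ->
  0 <= L1 -> monotone_fun ip B -> lipschitz_with L1 B ->
  0 < L2 -> cocoercive_with ip L2 C ->
  (exists a, A x a /\ a + B x + C x = 0) ->
  0 < lam -> lam < 2 / (4 * L1 + L2) ->
  (forall k : nat,
     resolvent_rel lam A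
       (xs k.+1 - 2 * lam *: B (xs k.+1) + lam *: B (xs k) - lam *: C (xs k.+1))
       (xs k.+2)) ->
  exists eps : R, 0 < eps /\
    forall k : nat,
      `|xs k.+2 - x| ^+ 2 + 2 * lam * ip (B (xs k.+2) - B (xs k.+1)) (x - xs k.+2)
        + (lam * L1 + eps) * `|xs k.+2 - xs k.+1| ^+ 2
      <= `|xs k.+1 - x| ^+ 2 + 2 * lam * ip (B (xs k.+1) - B (xs k)) (x - xs k.+1)
        + lam * L1 * `|xs k.+1 - xs k| ^+ 2.
Proof.
move=> ip_inner [monA _] L1_ge0 monB lipB L2_gt0 cocC [a [Axa a_eq]] lam_gt0.
move=> lam_lt iterate.
have lam_small : lam * (4 * L1 + L2) < 2 by rewrite -ltr_pdivlMr //; lra.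
exists (1 - lam * (4 * L1 + L2) / 2); split; first lra.
move=> k.
have -> : lam * L1 + (1 - lam * (4 * L1 + L2) / 2) = 1 - lam * L1 - lam * L2 / 2.
  by field.
exact (fhrb_energy_decrease ip_inner monA L1_ge0 monB lipB L2_gt0 cocC
  Axa a_eq lam_gt0 (iterate k)).
Qed.
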